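(* For positive integers $r,c$, let $R_{r,c}=(c^r)$ be the rectangular partition with $r$ parts all equal to $c$. Then $$\mathbb{SG}(\mathcal{L}(R_{r,c}))=\begin{cases}0 & c>1,\ r>1,\ c+r\text{ even},\\ 2 & (c\le2\text{ or } r\le2)\text{ and } c+r \text{ odd},\\ 1&\text{otherwise}.\end{cases}$$
   Context: A partition is a finite non-increasing sequence of positive integers; $()$ is the empty partition. For non-negative $i,j$, $\lambda[i,j]$ is $(\lambda_{i+1}-j,\dots,\lambda_r-j)$ with all non-positive entries removed. LCTR: positions $\mathcal{L}(\lambda)$; if $\lambda\neq()$ the two moves go to $\mathcal{L}(\lambda[1,0])$ and $\mathcal{L}(\lambda[0,1])$; $\mathcal{L}(())$ is terminal. Normal play; $\mathbb{SG}(A)=\operatorname{mex}\{\mathbb{SG}(B):A\to B\}$. *)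

From mathcomp Require Import all_boot.
Set Implicit Arguments. Unset Strict Implicit. Unset Printing Implicit Defensive.

Definition is_partition (l : seq nat) : bool :=
  sorted geq l && all (fun x => 0 < x) l.

(* lambda[i,j] = (lambda_{i+1} - j, ..., lambda_r - j), non-positive entries removed.
   Truncated nat subtraction yields 0 exactly for non-positive entries. *)
Definition shift (i j : nat) (l : seq nat) : seq nat :=
  filter (fun x => 0 < x) (map (fun x => x - j) (drop i l)).

Definition mex (s : seq nat) : nat :=
  find (fun n => n \notin s) (iota 0 (size s).+1).

(* Sprague-Grundy value of LCTR with explicit recursion fuel. Every move strictly
   decreases the sum of parts, so fuel (sumn l).+1 is sufficient. *)
Fixpoint sg_fuel (fuel : nat) (l : seq nat) : nat :=
  match fuel with
  | 0 => 0
  | f.+1 =>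
    match l with
    | [::] => 0
    | _ => mex [:: sg_fuel f (shift 1 0 l); sg_fuel f (shift 0 1 l)]
    end
  end.

Definition SG_LCTR (l : seq nat) : nat := sg_fuel (sumn l).+1 l.

(* Both moves keep a rectangle a rectangle: deleting the first row turns
   [c^r] into [c^(r-1)], deleting the first column turns it into [(c-1)^r].
   Hence SG(r, c) = mex {SG(r-1, c), SG(r, c-1)}, with 0 on empty rectangles,
   and the closed form satisfies the same recursion. Every move removes at
   least one cell, so the fuel r*c+1 of SG_LCTR never runs out. *)

From mathcomp Require Import all_boot zify.

Definition rect_sg (r c : nat) : nat :=
  if (r == 0) || (c == 0) then 0
  else if [&& 1 < c, 1 < r & ~~ odd (c + r)] then 0
  else if ((c <= 2) || (r <= 2)) && odd (c + r) then 2
  else 1.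

Lemma rect_sgS r c : rect_sg r.+1 c.+1 = mex [:: rect_sg r c.+1; rect_sg r.+1 c].
Proof.
rewrite /rect_sg.
case: r => [|[|[|r]]]; case: c => [|[|[|c]]] //=; rewrite ?addnS ?addSn ?addn0 //=.
all: by [case: (odd c) | case: (odd r) | case: (odd (c + r))].
Qed.

Lemma sg_fuel_nil f : sg_fuel f [::] = 0.
Proof. by case: f. Qed.

Lemma shift_row_nseq r c : 0 < c -> shift 1 0 (nseq r c) = nseq r.-1 c.
Proof.
move=> c_gt0; rewrite /shift drop1.
have -> : behead (nseq r c) = nseq r.-1 c by case: r.
by rewrite map_nseq filter_nseq subn0 c_gt0 mul1n.
Qed.

Lemma shift_col_nseq r c : shift 0 1 (nseq r c.+1) = nseq ((0 < c) * r) c.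
Proof. by rewrite /shift drop0 map_nseq filter_nseq subn1. Qed.

Lemma sg_fuel_nseq f r c :
  0 < c -> r * c < f -> sg_fuel f (nseq r c) = rect_sg r c.
Proof.
elim: f r c => [|f IHf] [|r] [|c] // _ fuel_gt.
rewrite rect_sgS [LHS]/= -[c.+1 :: _]/(nseq r.+1 c.+1).
rewrite shift_row_nseq // shift_col_nseq /=.
congr (mex [:: _; _]); first by apply: IHf => //; nia.
case: c fuel_gt => [|c] fuel_gt; first by rewrite sg_fuel_nil /rect_sg orbT.
by rewrite mul1n; apply: IHf => //; nia.
Qed.

Theorem mainTheorem12 (r c : nat) : 0 < r -> 0 < c ->
  SG_LCTR (nseq r c) =
    if [&& 1 < c, 1 < r & ~~ odd (c + r)] then 0
    else if ((c <= 2) || (r <= 2)) && odd (c + r) then 2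
    else 1.
Proof.
move=> r_gt0 c_gt0.
rewrite /SG_LCTR sumn_nseq sg_fuel_nseq 1?mulnC //.
by case: r r_gt0 => [|r]; case: c c_gt0.
Qed.
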